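(* Let $q>1$ be prime and $0<j\le q$. Then $\bar{\mathsf{L}}^j_q$ is the unique logic strongly maximal with respect to $\mathsf{CPL}$ that extends $\mathsf{L}^j_q$; in fact, $\bar{\mathsf{L}}^j_q$ is the only finitary structural logic $L$ with ${\vDash_{\mathsf{L}^j_q}}\subsetneq{\vdash_L}\subsetneq{\vDash_{\mathsf{CPL}}}$.
   Context: $\mathbf{ŁV}_{n+1}=(\{0,\frac1n,\dots,1\},\neg,\to)$ with $\neg x=1-x$, $x\to y=\min\{1,1-x+y\}$. $F_{j/q}=\{x:x\ge j/q\}$; $\mathsf{L}^j_q=\langle\mathbf{ŁV}_{q+1},F_{j/q}\rangle$; $\bar{\mathsf{L}}^j_q=\langle\mathbf{ŁV}_{q+1}\times\mathbf{ŁV}_2,F_{j/q}\times\{1\}\rangle$; $\mathsf{CPL}=\langle\mathbf{ŁV}_2,\{1\}\rangle$. Matrix consequence: every evaluation sending the premises into the designated set sends the conclusion into it. $L_1$ is strongly maximal w.r.t. $L_2$ if ${\vdash_{L_1}}\subsetneq{\vdash_{L_2}}$ and adding to $L_1$ (as a structural rule, closed under substitution) any finitary rule valid in $L_2$ but not in $L_1$ yields exactly $L_2$. *)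

From Stdlib Require List.
From mathcomp Require Import all_boot.
Set Implicit Arguments. Unset Strict Implicit. Unset Printing Implicit Defensive.

Inductive fm : Type :=
| Var : nat -> fm
| Neg : fm -> fm
| Imp : fm -> fm -> fm.

Fixpoint subst (s : nat -> fm) (f : fm) : fm :=
  match f with
  | Var n => s n
  | Neg a => Neg (subst s a)
  | Imp a b => Imp (subst s a) (subst s b)
  end.

Definition fset := fm -> Prop.
Definition crel := fset -> fm -> Prop.
Definition set_of_seq (s : seq fm) : fset := fun f => List.In f s.

Record matrix := Matrix {
  carrier : Type;
  mneg : carrier -> carrier;
  mimp : carrier -> carrier -> carrier;
  desig : carrier -> Prop }.

Fixpoint eval (M : matrix) (v : nat -> carrier M) (f : fm) : carrier M :=
  match f with
  | Var n => v n
  | Neg a => mneg (eval v a)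
  | Imp a b => mimp (eval v a) (eval v b)
  end.

Definition mcons (M : matrix) : crel := fun G f =>
  forall v : nat -> carrier M,
    (forall g, G g -> desig (eval v g)) -> desig (eval v f).

(** Łukasiewicz algebra ŁV_{n+1} on {0,1/n,...,1}; x : 'I_n.+1 encodes x/n. *)
Definition lneg (n : nat) (x : 'I_n.+1) : 'I_n.+1 := inord (n - x).
Definition limp (n : nat) (x y : 'I_n.+1) : 'I_n.+1 := inord (minn n (n - x + y)).

Definition Lmat (q j : nat) : matrix :=
  @Matrix 'I_q.+1 (@lneg q) (@limp q) (fun x => j <= x).

Definition Lbarmat (q j : nat) : matrix :=
  @Matrix ('I_q.+1 * 'I_2)%type
    (fun x => (lneg x.1, lneg x.2))
    (fun x y => (limp x.1 y.1, limp x.2 y.2))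
    (fun x => j <= x.1 /\ 1 <= x.2).

Definition CPLmat : matrix := @Matrix 'I_2 (@lneg 1) (@limp 1) (fun x => 1 <= x).

Definition is_logic (R : crel) : Prop :=
  (forall (G : fset) f, G f -> R G f) /\
  (forall (G D : fset) f, (forall g, G g -> D g) -> R G f -> R D f) /\
  (forall (G D : fset) f, (forall g, D g -> R G g) -> R D f -> R G f) /\
  (forall (s : nat -> fm) (G : fset) f,
      R G f -> R (fun g => exists2 h, G h & g = subst s h) (subst s f)).

Definition finitary (R : crel) : Prop :=
  forall G f, R G f ->
    exists2 G0 : seq fm, (forall g, List.In g G0 -> G g) & R (set_of_seq G0) f.

Definition finitary_logic (R : crel) : Prop := is_logic R /\ finitary R.

Definition crel_incl (R1 R2 : crel) : Prop := forall G f, R1 G f -> R2 G f.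
Definition crel_eq (R1 R2 : crel) : Prop := forall G f, R1 G f <-> R2 G f.
Definition crel_sincl (R1 R2 : crel) : Prop := crel_incl R1 R2 /\ ~ crel_incl R2 R1.

Definition rule := (seq fm * fm)%type.
Definition valid_rule (R : crel) (r : rule) : Prop := R (set_of_seq r.1) r.2.

Definition extend_by (R : crel) (r : rule) : crel := fun G f =>
  forall R', is_logic R' -> crel_incl R R' -> valid_rule R' r -> R' G f.

Definition strongly_maximal (R1 R2 : crel) : Prop :=
  crel_sincl R1 R2 /\
  forall r : rule, valid_rule R2 r -> ~ valid_rule R1 r ->
    crel_eq (extend_by R1 r) R2.

(* Let L be a structural logic extending L^j_q and D ⊬_L ψ, with D finite and everything
   in the variables p_0, ..., p_{k-1}.  Consider the ŁV_{q+1}-valuations validating every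
   k-variable L-consequence of D; each either gives some p_i (i < k) an interior value or
   is classical.  As q is prime, one formula in one variable detects interior values, so
   a substitution can send each p_r to a formula that takes any prescribed value on the
   non-classical valuations and any prescribed classical value on the classical ones, and
   structurality transports L-derivations along it.  Hence: if all these valuations are
   non-classical, L ⊆ L^j_q; if both kinds occur, L ⊆ \bar L^j_q and D ⊬ ψ there; if all
   are classical, D ⊬ ψ in CPL.  By compactness of finite matrices, any logic strictly
   between L^j_q and CPL is thus \bar L^j_q, and the rules δ(p) ⊢ ⊥ and ⊢ ¬δ(p), where
   δ(p) is 1 at interior p and 0 elsewhere, separate the three logics. *)

From mathcomp Require Import all_boot zify.
From Stdlib Require Import Classical ClassicalEpsilon.
Set Implicit Arguments. Unset Strict Implicit. Unset Printing Implicit Defensive.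

Lemma In_of_mem (T : eqType) (x : T) (s : seq T) : x \in s -> List.In x s.
Proof. by elim: s => [//|y s IH]; rewrite inE => /orP[/eqP->|/IH]; [left|right]. Qed.

Lemma eval_ext (M : matrix) (v v' : nat -> carrier M) f :
  v =1 v' -> eval v f = eval v' f.
Proof. by move=> vv'; elim: f => [n|a IH|a IHa b IHb] /=; rewrite ?vv' ?IH ?IHa ?IHb. Qed.

Lemma eval_subst (M : matrix) (v : nat -> carrier M) s f :
  eval v (subst s f) = eval (fun n => eval v (s n)) f.
Proof. by elim: f => [n|a IH|a IHa b IHb] //=; rewrite ?IH ?IHa ?IHb. Qed.

Fixpoint vars_below (k : nat) (f : fm) : bool :=
  match f with
  | Var n => n < k
  | Neg a => vars_below k a
  | Imp a b => vars_below k a && vars_below k b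
  end.

Lemma vars_below_mono k k' f : k <= k' -> vars_below k f -> vars_below k' f.
Proof.
move=> le_kk'; elim: f => [n|a IH|a IHa b IHb] /=; first by move/leq_trans->.
  exact: IH.
by case/andP=> /IHa -> /IHb ->.
Qed.

Lemma vars_below_exists f : exists k, vars_below k f.
Proof.
elim: f => [n|a IH|a [ka Ha] b [kb Hb]] //=; first by exists n.+1.
exists (maxn ka kb).
by rewrite (vars_below_mono (leq_maxl _ _) Ha) (vars_below_mono (leq_maxr _ _) Hb).
Qed.

Lemma vars_below_seq (s : seq fm) :
  exists2 k, 0 < k & forall g, List.In g s -> vars_below k g.
Proof.
elim: s => [|f s [k k_gt0 Hs]]; first by exists 1.
have [kf Hf] := vars_below_exists f.
exists (maxn k kf) => [|g [<-|/Hs]]; first by rewrite leq_max k_gt0.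
  exact/vars_below_mono/Hf/leq_maxr.
exact/vars_below_mono/leq_maxl.
Qed.

Lemma eval_vars_below (M : matrix) (v v' : nat -> carrier M) k f :
  vars_below k f -> (forall i, i < k -> v i = v' i) -> eval v f = eval v' f.
Proof.
move=> Hf vv'; elim: f Hf => [n|a IH|a IHa b IHb] /=; first exact: vv'.
  by move=> /IH ->.
by case/andP=> /IHa -> /IHb ->.
Qed.

Lemma vars_below_subst k s f :
  (forall n, vars_below k (s n)) -> vars_below k (subst s f).
Proof. by move=> Hs; elim: f => [n|a IH|a IHa b IHb] //=; rewrite IHa IHb. Qed.

Lemma mcons_logic M : is_logic (mcons M).
Proof.
split; [|split; [|split]].
- by move=> G f Gf v Hv; apply: Hv.
- by move=> G D f GD H v Hv; apply: H => g /GD; apply: Hv.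
- by move=> G D f HD H v Hv; apply: H => g /HD; apply.
- move=> s G f H v Hv; rewrite eval_subst; apply: H => g Gg.
  by rewrite -eval_subst; apply: Hv; exists g.
Qed.

Lemma logic_mono (R : crel) (G G' : fset) f :
  is_logic R -> (forall g, G g -> G' g) -> R G f -> R G' f.
Proof. by case=> _ [mono _]; apply: mono. Qed.

Section Compactness.
Variable M : matrix.
Local Notation A := (carrier M).
Variable el : seq A.
Hypothesis el_full : forall x, List.In x el.

Section Refutation.
Variables (G : fset) (f : fm).

Definition locally_refutable (p : nat -> A) (n : nat) : Prop :=
  forall G0 : seq fm, (forall g, List.In g G0 -> G g) ->
    exists v : nat -> A, [/\ forall i, i < n -> v i = p i,
      forall g, List.In g G0 -> desig (eval v g) & ~ desig (eval v f)].

Definition upd (p : nat -> A) (n : nat) (a : A) : nat -> A :=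
  fun i => if i == n then a else p i.

(* If every value [a] at [n] were defeated by some finite [G0 a], the union of
   these finitely many [G0 a] would defeat [p]. *)
Lemma locally_refutable_step p n :
  locally_refutable p n -> exists a, locally_refutable (upd p n a) n.+1.
Proof.
move=> p_ref; apply: NNPP => none.
have defeated a : exists G0 : seq fm, (forall g, List.In g G0 -> G g) /\
    forall v : nat -> A, (forall i, i < n.+1 -> v i = upd p n a i) ->
      (forall g, List.In g G0 -> desig (eval v g)) -> desig (eval v f).
  apply: NNPP => not_def; apply: none; exists a => G0 G0G; apply: NNPP => no_v.
  apply: not_def; exists G0; split=> // v v_p v_G0; apply: NNPP => v_f.
  by apply: no_v; exists v.
pose G0 a := proj1_sig (constructive_indefinite_description _ (defeated a)).
have G0P a := proj2_sig (constructive_indefinite_description _ (defeated a)).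
have [|v [v_p v_G0 v_f]] := p_ref (List.flat_map G0 el).
  by move=> g /List.in_flat_map[a [_ /(proj1 (G0P a))]].
apply: v_f; apply: (proj2 (G0P (v n))) => [i|g g_G0].
  rewrite ltnS /upd leq_eqVlt => /orP[/eqP->|lt_in]; first by rewrite eqxx.
  by rewrite ltn_eqF // v_p.
by apply: v_G0; apply/List.in_flat_map; exists (v n).
Qed.

Section Limit.
Variable p0 : nat -> A.
Hypothesis refuted0 : locally_refutable p0 0.

Definition next (p : nat -> A) (n : nat) : A :=
  epsilon (inhabits (p0 0)) (fun a => locally_refutable p n -> locally_refutable (upd p n a) n.+1).

Fixpoint approx (n : nat) : nat -> A :=
  if n is m.+1 then upd (approx m) m (next (approx m) m) else p0.

Lemma approx_refutable n : locally_refutable (approx n) n.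
Proof.
elim: n => [|n IH] /=; first exact: refuted0.
have [a Ha] := locally_refutable_step IH.
exact: (epsilon_spec _ _ (ex_intro _ a (fun _ => Ha)) IH).
Qed.

Definition limit (i : nat) : A := approx i.+1 i.

Lemma approx_limit m i : i < m -> approx m i = limit i.
Proof.
elim: m => [//|m IH]; rewrite ltnS leq_eqVlt => /orP[/eqP->//|lt_im] /=.
by rewrite /upd ltn_eqF // IH.
Qed.
End Limit.
End Refutation.

Lemma mcons_finitary : finitary (mcons M).
Proof.
move=> G f Gf; apply: NNPP => none.
have [v0 _] : exists v : nat -> A, True.
  by apply: NNPP => no_v; apply: none; exists nil => // v; case: no_v; exists v.
have refuted0 : locally_refutable G f v0 0.
  move=> G0 G0G; apply: NNPP => no_v; apply: none; exists G0 => // v v_G0.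
  by apply: NNPP => v_f; apply: no_v; exists v.
pose w := limit G f v0.
have refute_from m G0 : (forall g, List.In g G0 -> G g) ->
    exists v : nat -> A, [/\ forall h, vars_below m h -> eval v h = eval w h,
      forall g, List.In g G0 -> desig (eval v g) & ~ desig (eval v f)].
  case/(approx_refutable refuted0 m) => v [v_approx v_G0 v_f]; exists v; split=> // h h_vars.
  by apply: (eval_vars_below h_vars) => i lt_im; rewrite v_approx // approx_limit.
have not_f : ~ desig (eval w f).
  have [m f_vars] := vars_below_exists f.
  by have [//|v [v_w _]] := refute_from m nil; rewrite v_w.
apply/not_f/Gf => g Gg.
have [m _ gf_vars] := vars_below_seq [:: g; f].
have [|v [v_w v_g _]] := refute_from m [:: g]; first by move=> h [<-|].
by rewrite -v_w; [apply: v_g; left | apply: gf_vars; left].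
Qed.
End Compactness.

Definition Top a := Imp a a.
Definition Bot a := Neg (Top a).
Definition Minus a b := Neg (Imp a b).
Definition Oplus a b := Imp (Neg a) b.
Definition Odot a b := Neg (Oplus (Neg a) (Neg b)).
Definition Wedge a b := Minus a (Minus a b).
Definition Vee a b := Imp (Imp a b) b.
Fixpoint Opow r a := if r is r'.+1 then Oplus a (Opow r' a) else Bot a.
Fixpoint Dpow r a := if r is r'.+1 then Odot a (Dpow r' a) else Top a.
Fixpoint BigVee (F : nat -> fm) k :=
  if k is k'.+1 then Vee (F k') (BigVee F k') else Bot (Var 0).

Definition interior (q x : nat) := 0 < x < q.

Lemma peak_arith q x : 1 < q -> x <= q ->
  minn x (q + q.-1 * (q - x) - q.-1 * q) = (x == 1).
Proof. by case: q => [|[|q]] // _; case: x => [|[|x]] /=; nia. Qed.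

Section Lukasiewicz.
Variables q j : nat.
Local Notation ev := (@eval (Lmat q j)).

Lemma ev_le v a : ev v a <= q.
Proof. by rewrite -ltnS ltn_ord. Qed.

Lemma ev_Neg v a : ev v (Neg a) = q - ev v a :> nat.
Proof. by rewrite /= /lneg inordK // ltnS leq_subr. Qed.

Lemma ev_Imp v a b : ev v (Imp a b) = minn q (q - ev v a + ev v b) :> nat.
Proof. by rewrite /= /limp inordK // ltnS geq_minl. Qed.

Ltac ev_lia v a b := rewrite ?(ev_Neg, ev_Imp); have := ev_le v a; have := ev_le v b; lia.

Lemma ev_Top v a : ev v (Top a) = q :> nat.
Proof. ev_lia v a a. Qed.

Lemma ev_Bot v a : ev v (Bot a) = 0 :> nat.
Proof. by rewrite ev_Neg ev_Top subnn. Qed.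

Lemma ev_Minus v a b : ev v (Minus a b) = ev v a - ev v b :> nat.
Proof. ev_lia v a b. Qed.

Lemma ev_Oplus v a b : ev v (Oplus a b) = minn q (ev v a + ev v b) :> nat.
Proof. ev_lia v a b. Qed.

Lemma ev_Odot v a b : ev v (Odot a b) = ev v a + ev v b - q :> nat.
Proof. rewrite ev_Neg ev_Oplus; ev_lia v a b. Qed.

Lemma ev_Wedge v a b : ev v (Wedge a b) = minn (ev v a) (ev v b) :> nat.
Proof. rewrite !ev_Minus; lia. Qed.

Lemma ev_Vee v a b : ev v (Vee a b) = maxn (ev v a) (ev v b) :> nat.
Proof. ev_lia v a b. Qed.

Lemma ev_Opow v r a : ev v (Opow r a) = minn q (r * ev v a) :> nat.
Proof. by elim: r => [|r IH]; rewrite ?ev_Bot ?ev_Oplus ?IH; lia. Qed.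

Lemma ev_Dpow v r a : ev v (Dpow r a) = q + r * ev v a - r * q :> nat.
Proof. by elim: r => [|r IH]; rewrite ?ev_Top ?ev_Odot ?IH; have := ev_le v a; lia. Qed.

Lemma ev_BigVee v F k : ev v (BigVee F k) = \max_(i < k) ev v (F i) :> nat.
Proof.
elim: k => [|k IH]; first by rewrite ev_Bot big_ord0.
by rewrite ev_Vee IH big_ord_recr maxnC.
Qed.

Lemma ev_classical (v : nat -> 'I_q.+1) f :
  (forall n, ~~ interior q (v n)) -> ~~ interior q (ev v f).
Proof.
rewrite /interior => v_cl; elim: f => [n|a IH|a IHa b IHb]; first exact: v_cl.
  by rewrite ev_Neg; have := ev_le v a; lia.
by rewrite ev_Imp; have := ev_le v a; have := ev_le v b; lia.
Qed.

Definition Peak a := Wedge a (Dpow q.-1 (Neg a)).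

Lemma ev_Peak v a : 1 < q -> ev v (Peak a) = (ev v a == 1 :> nat) :> nat.
Proof. by move=> q_gt1; rewrite ev_Wedge ev_Dpow ev_Neg peak_arith // ev_le. Qed.

Definition Delta a := Opow q (Wedge a (Neg a)).

Lemma ev_Delta v a : ev v (Delta a) = interior q (ev v a) * q :> nat.
Proof.
rewrite ev_Opow ev_Wedge ev_Neg /interior; have := ev_le v a.
move: (nat_of_ord _) => x le_xq; case: (boolP (0 < x < q)) => [/andP[x_gt0 lt_xq]|x_cl].
  by rewrite mul1n; apply/minn_idPl/leq_pmulr; rewrite leq_min x_gt0 subn_gt0.
by rewrite mul0n (_ : minn x (q - x) = 0) ?muln0 //; lia.
Qed.
End Lukasiewicz.

Section Embedding.
Variables q j : nat.
Local Notation ev := (@eval (Lmat q j)).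
Local Notation cev := (@eval CPLmat).

Definition emb (x : 'I_2) : 'I_q.+1 := inord (x * q).

Lemma emb_val x : emb x = x * q :> nat.
Proof. by rewrite inordK // ltnS; case: x => [[|[|]]] //= _; rewrite ?mul1n. Qed.

Lemma ev_emb (u : nat -> 'I_2) f : ev (fun n => emb (u n)) f = emb (cev u f).
Proof.
apply: ord_inj; elim: f => [n|a IH|a IHa b IHb] //=.
  rewrite [LHS]ev_Neg IH !emb_val (@ev_Neg 1 1).
  by have := @ev_le 1 1 u a; case: (cev u a : nat) => [|[|]] //= _; lia.
rewrite [LHS]ev_Imp IHa IHb !emb_val (@ev_Imp 1 1).
have := @ev_le 1 1 u a; have := @ev_le 1 1 u b.
by case: (cev u a : nat) => [|[|]]; case: (cev u b : nat) => [|[|]] //= _ _; lia.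
Qed.

Lemma eval_Lbarmat (w : nat -> 'I_q.+1 * 'I_2) f :
  @eval (Lbarmat q j) w f = (ev (fun n => (w n).1) f, cev (fun n => (w n).2) f).
Proof. by elim: f => [n|a IH|a IHa b IHb] /=; rewrite ?IH ?IHa ?IHb //; case: (w n). Qed.

Definition cls (x : 'I_q.+1) : 'I_2 := inord (x == q :> nat).

Lemma emb_cls (x : 'I_q.+1) : ~~ interior q x -> emb (cls x) = x.
Proof.
rewrite /interior => x_cl; apply: ord_inj; rewrite emb_val inordK; last by case: eqP.
by have := ltn_ord x; case: eqP => [->|]; lia.
Qed.

Lemma ev_classical_below (v : nat -> 'I_q.+1) k f :
  (forall i, i < k -> ~~ interior q (v i)) -> vars_below k f ->
  ev v f = emb (cev (fun n => cls (v n)) f).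
Proof.
by move=> v_cl f_k; rewrite -ev_emb; apply: (eval_vars_below f_k) => i /v_cl/emb_cls.
Qed.

Hypothesis j_range : 0 < j <= q.

Lemma desig_emb x : (j <= emb x) = (0 < x).
Proof. by rewrite emb_val; case: x => [[|[|]]] //= _; lia. Qed.
End Embedding.

Section Definability.
Variables q j : nat.
Local Notation ev := (@eval (Lmat q j)).

Definition definable (d : 'I_q.+1) (m : nat) := exists t, ev (fun _ => d) t = m :> nat.

Lemma definable_sub (d : 'I_q.+1) a b : definable d a -> definable d b -> definable d (a - b).
Proof. by move=> [ta Ha] [tb Hb]; exists (Minus ta tb); rewrite ev_Minus Ha Hb. Qed.

Lemma definable_gcd (d : 'I_q.+1) a b : definable d a -> definable d b -> definable d (gcdn a b).
Proof.
have [n] := ubnP (a + b); elim: n a b => // n IH a b lt_ab Ha Hb.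
have [->|a_gt0] := posnP a; first by rewrite gcd0n.
have [->|b_gt0] := posnP b; first by rewrite gcdn0.
have [le_ab|lt_ba] := leqP a b.
  by rewrite -(subnKC le_ab) gcdnDl; apply: IH; [lia | | apply: definable_sub].
by rewrite gcdnC -(subnKC (ltnW lt_ba)) gcdnDl; apply: IH; [lia | | apply: definable_sub].
Qed.

Hypothesis q_prime : prime q.

(* The values at [d] of one-variable terms contain [d] and [q] and are closed under
   truncated subtraction, hence under [gcdn]. *)
Lemma definable_one (d : 'I_q.+1) : interior q d -> definable d 1.
Proof.
case/andP=> d_gt0 lt_dq.
have <- : gcdn d q = 1.
  apply/eqP; rewrite gcdnC -/(coprime q d) prime_coprime //.
  by apply/negP => /(dvdn_leq d_gt0); lia.
by apply: definable_gcd; [exists (Var 0) | exists (Top (Var 0)); rewrite ev_Top].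
Qed.

(* [E] is the join of the [Peak t_i], where [t_i] takes value [1/q] at the constant
   valuation [i]; at a classical point every term is classical, so no [Peak] fires. *)
Lemma interior_indicator : exists E, forall d, ev (fun _ => d) E = interior q d :> nat.
Proof.
have q_gt1 := prime_gt1 q_prime.
pose pick i := epsilon (inhabits (Var 0)) (fun t => ev (fun _ => inord i) t = 1 :> nat).
have pick1 i : interior q i -> ev (fun _ => inord i) (pick i) = 1 :> nat.
  move=> i_int; apply: (epsilon_spec (inhabits (Var 0)) (fun t => ev (fun _ => inord i) t = 1 :> nat)).
  apply: definable_one.
  by rewrite /interior inordK //; case/andP: i_int => _ /ltnW.
exists (BigVee (fun i => Peak q (pick i)) q) => d; rewrite ev_BigVee.
have peak_le1 i : ev (fun _ => d) (Peak q (pick i)) <= 1 by rewrite ev_Peak //; case: eqP.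
case d_int: (interior q d); apply/anti_leq/andP; split.
- by apply/bigmax_leqP => i _.
- have lt_dq : d < q by case/andP: d_int.
  have := @leq_bigmax _ (fun i : 'I_q => nat_of_ord (ev (fun _ => d) (Peak q (pick i)))) (Ordinal lt_dq).
  by rewrite ev_Peak //= -{1}(inord_val d) pick1 ?inord_val.
- apply/bigmax_leqP => i _; rewrite ev_Peak // leqn0 eqb0.
  have := @ev_classical q j (fun _ => d) (pick i) (fun _ => negbT d_int).
  by apply: contra => /eqP ->; rewrite /interior.
- by [].
Qed.
End Definability.

Definition AnyInterior (E : fm) k := BigVee (fun i => subst (fun _ => Var i) E) k.

Definition Blend q A w (b : bool) :=
  if b then Oplus (Opow w A) (Neg (Opow q A)) else Opow w A.

Definition nonclassical q k (v : nat -> 'I_q.+1) := [exists i : 'I_k, interior q (v i)].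

Lemma not_nonclassical q k (v : nat -> 'I_q.+1) :
  ~~ nonclassical k v -> forall i, i < k -> ~~ interior q (v i).
Proof. by move=> ncl i lt_ik; apply: contra ncl => int_i; apply/existsP; exists (Ordinal lt_ik). Qed.

Lemma vars_below_Opow k r a : vars_below k (Opow r a) = vars_below k a.
Proof. by elim: r => [|r IH] /=; rewrite ?IH andbb. Qed.

Lemma vars_below_AnyInterior E k : 0 < k -> vars_below k (AnyInterior E k).
Proof.
move=> k_gt0; suff : forall m, m <= k -> vars_below k (AnyInterior E m) by apply.
elim=> [|m IH] le_mk /=; first by rewrite k_gt0.
by rewrite IH 1?ltnW // andbT vars_below_subst.
Qed.

Lemma vars_below_Blend q k A w b :
  vars_below k A -> vars_below k (Blend q A w b).
Proof. by case: b => /=; rewrite !vars_below_Opow => ->. Qed.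

Section Blending.
Variables (q j : nat) (E : fm).
Local Notation ev := (@eval (Lmat q j)).
Hypothesis ev_E : forall d, ev (fun _ => d) E = interior q d :> nat.

Lemma ev_AnyInterior v k : ev v (AnyInterior E k) = nonclassical k v :> nat.
Proof.
have ev_term i : ev v (subst (fun _ => Var i) E) = interior q (v i) :> nat.
  by rewrite eval_subst -ev_E; congr nat_of_ord; apply: eval_ext.
rewrite ev_BigVee /nonclassical; apply/anti_leq/andP; split.
  apply/bigmax_leqP => i _; rewrite ev_term.
  by case: (boolP (interior q _)) => // int_i; rewrite (introT existsP) //; exists i.
case: existsP => // -[i int_i].
by have := @leq_bigmax _ (fun i : 'I_k => nat_of_ord (ev v (subst (fun _ => Var i) E))) i; rewrite ev_term int_i.
Qed.

Lemma ev_Blend v A w (b c : bool) : w <= q -> ev v A = c :> nat ->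
  ev v (Blend q A w b) = (if c then w else b * q) :> nat.
Proof.
move=> le_wq evA; case: b; rewrite /Blend ?ev_Oplus ?ev_Neg !ev_Opow evA;
  by case: c evA => _; lia.
Qed.
End Blending.

Section Trichotomy.
Variables (q j : nat) (E : fm).
Hypothesis j_range : 0 < j <= q.
Local Notation ev := (@eval (Lmat q j)).
Local Notation cev := (@eval CPLmat).
Local Notation M := (mcons (Lmat q j)).
Local Notation B := (mcons (Lbarmat q j)).
Local Notation C := (mcons CPLmat).
Hypothesis ev_E : forall d, ev (fun _ => d) E = interior q d :> nat.

Definition blend_subst k (w : nat -> 'I_q.+1 * 'I_2) (r : nat) : fm :=
  Blend q (AnyInterior E k) (w r).1 ((w r).2 == 1 :> nat).

Lemma ev_blend_subst v k w g :
  ev v (subst (blend_subst k w) g) =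
  if nonclassical k v then ev (fun n => (w n).1) g else emb q (cev (fun n => (w n).2) g).
Proof.
rewrite eval_subst; case: ifP => ncl; last rewrite -ev_emb.
  apply: eval_ext => r; apply: ord_inj.
  by rewrite (ev_Blend _ (leq_ord _) (ev_AnyInterior ev_E v k)) ncl.
apply: eval_ext => r; apply: ord_inj.
rewrite (ev_Blend _ (leq_ord _) (ev_AnyInterior ev_E v k)) ncl emb_val.
by case: (w r).2 => [[|[|]]].
Qed.

Lemma vars_below_blend_subst k w r : 0 < k -> vars_below k (blend_subst k w r).
Proof. by move=> k_gt0; apply/vars_below_Blend/vars_below_AnyInterior. Qed.

Variable L : crel.
Hypotheses (L_logic : is_logic L) (Lmat_L : crel_incl M L).
Variables (D : seq fm) (psi : fm) (k : nat).
Hypotheses (k_gt0 : 0 < k) (D_vars : forall g, List.In g D -> vars_below k g).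
Hypotheses (psi_vars : vars_below k psi) (L_psi : ~ L (set_of_seq D) psi).

Definition models_theory v :=
  forall g, vars_below k g -> L (set_of_seq D) g -> j <= ev v g.

Lemma models_theory_complete chi : vars_below k chi ->
  (forall v, models_theory v -> j <= ev v chi) -> L (set_of_seq D) chi.
Proof.
move=> chi_vars chi_true; have [_ [_ [cut _]]] := L_logic.
apply: (cut _ (L (set_of_seq D))) => //; apply: Lmat_L => v v_th.
by apply: chi_true => g _; apply: v_th.
Qed.

Lemma models_theory_subst (G : fset) phi s : L G phi ->
  (forall r, vars_below k (s r)) ->
  (forall g, G g -> forall v, models_theory v -> j <= ev v (subst s g)) ->
  forall v, models_theory v -> j <= ev v (subst s phi).
Proof.
move=> L_phi s_vars G_true v v_th; apply: v_th; first exact: vars_below_subst.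
have [_ [_ [cut structural]]] := L_logic.
apply: (cut _ (fun g => exists2 h, G h & g = subst s h)); last exact: structural.
move=> _ [h Gh ->]; apply: models_theory_complete; first exact: vars_below_subst.
exact: G_true.
Qed.

Lemma models_theory_premise v g : models_theory v -> List.In g D -> j <= ev v g.
Proof. by move=> v_th Dg; apply: v_th; [apply: D_vars | case: L_logic => refl _; apply: refl]. Qed.

Lemma models_theory_refuting : exists2 v, models_theory v & ev v psi < j.
Proof.
apply: NNPP => none; apply/L_psi/models_theory_complete => // v v_th.
by rewrite leqNgt; apply/negP => lt_psi; apply: none; exists v.
Qed.

Lemma incl_Lmat_of_nonclassical :
  (forall v, models_theory v -> nonclassical k v) -> crel_incl L M.
Proof.
move=> all_ncl G phi L_phi w0 w0_G.
pose s := blend_subst k (fun r => (w0 r, ord0)).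
have ev_s v g : models_theory v -> ev v (subst s g) = ev w0 g.
  by move=> /all_ncl ncl; rewrite ev_blend_subst ncl.
have [v v_th _] := models_theory_refuting.
rewrite /= -(ev_s v phi v_th); apply: (models_theory_subst L_phi) v_th => [r|g Gg v' v'_th].
  exact: vars_below_blend_subst.
by rewrite ev_s //; apply: w0_G.
Qed.

Lemma incl_Lbarmat_of_mixed :
  (exists2 v, models_theory v & nonclassical k v) ->
  (exists2 v, models_theory v & ~~ nonclassical k v) -> crel_incl L B.
Proof.
move=> [vn vn_th vn_ncl] [vc vc_th vc_cl] G phi L_phi w w_G.
have s_true := models_theory_subst (s := blend_subst k w) L_phi
  (fun r => vars_below_blend_subst w r k_gt0).
have {}s_true : forall v, models_theory v -> j <= ev v (subst (blend_subst k w) phi).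
  apply: s_true => g /w_G; rewrite /= eval_Lbarmat => -[w1_g w2_g] v _.
  by rewrite ev_blend_subst; case: ifP => // _; rewrite desig_emb.
rewrite /= eval_Lbarmat; split.
  by have := s_true vn vn_th; rewrite ev_blend_subst vn_ncl.
by have := s_true vc vc_th; rewrite ev_blend_subst (negbTE vc_cl) desig_emb.
Qed.

Lemma desig_classical v g : ~~ nonclassical k v -> vars_below k g ->
  (j <= ev v g) = (0 < cev (fun n => cls (v n)) g).
Proof.
by move=> v_cl g_vars; rewrite (ev_classical_below j (not_nonclassical v_cl) g_vars) desig_emb.
Qed.

Lemma not_CPL_of_classical :
  (forall v, models_theory v -> ~~ nonclassical k v) -> ~ C (set_of_seq D) psi.
Proof.
move=> all_cl CPL_psi; have [v v_th psi_false] := models_theory_refuting.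
move: psi_false; rewrite ltnNge desig_classical ?all_cl //; apply/negP/negPn.
apply: CPL_psi => g Dg; rewrite /= -desig_classical ?all_cl ?D_vars //.
exact: models_theory_premise.
Qed.

Lemma not_Lbarmat_of_classical_model :
  (exists2 v, models_theory v & ~~ nonclassical k v) -> ~ B (set_of_seq D) psi.
Proof.
move=> [vc vc_th vc_cl] B_psi; have [v v_th psi_false] := models_theory_refuting.
have := B_psi (fun n => (v n, cls (vc n))); rewrite /= eval_Lbarmat /= leqNgt psi_false.
case=> // g Dg; rewrite /= eval_Lbarmat; split; first exact: models_theory_premise.
by rewrite -desig_classical ?D_vars //; apply: models_theory_premise.
Qed.

Lemma unprovable_trichotomy :
  ~ C (set_of_seq D) psi \/ crel_incl L M \/
  (crel_incl L B /\ ~ B (set_of_seq D) psi).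
Proof.
case: (classic (exists2 v, models_theory v & nonclassical k v)) => [ncl|all_cl].
  case: (classic (exists2 v, models_theory v & ~~ nonclassical k v)) => [cl|all_ncl].
    by right; right; split; [apply: incl_Lbarmat_of_mixed | apply: not_Lbarmat_of_classical_model].
  right; left; apply: incl_Lmat_of_nonclassical => v v_th.
  by case: (boolP (nonclassical k v)) => // v_cl; case: all_ncl; exists v.
left; apply: not_CPL_of_classical => v v_th.
by case: (boolP (nonclassical k v)) => // v_ncl; case: all_cl; exists v.
Qed.
End Trichotomy.

Lemma not_crel_incl (R1 R2 : crel) :
  ~ crel_incl R1 R2 -> exists G f, R1 G f /\ ~ R2 G f.
Proof.
move=> not12; apply: NNPP => none; apply: not12 => G f R1f.
by apply: NNPP => not2; apply: none; exists G, f.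
Qed.

Section Main.
Variables q j : nat.
Hypotheses (q_prime : prime q) (j_range : 0 < j <= q).
Local Notation ev := (@eval (Lmat q j)).
Local Notation cev := (@eval CPLmat).
Local Notation M := (mcons (Lmat q j)).
Local Notation B := (mcons (Lbarmat q j)).
Local Notation C := (mcons CPLmat).

Lemma unprovable_cases (L : crel) D psi :
  is_logic L -> crel_incl M L -> ~ L (set_of_seq D) psi ->
  ~ C (set_of_seq D) psi \/ crel_incl L M \/ (crel_incl L B /\ ~ B (set_of_seq D) psi).
Proof.
move=> L_logic ML L_psi; have [E ev_E] := interior_indicator j q_prime.
have [k k_gt0 k_vars] := vars_below_seq (psi :: D).
apply: (unprovable_trichotomy j_range ev_E L_logic ML k_gt0) L_psi.
  by move=> g Dg; apply: k_vars; right.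
by apply: k_vars; left.
Qed.

Lemma finitary_CPL : finitary C.
Proof. by apply: (@mcons_finitary CPLmat (enum 'I_2)) => x; apply: In_of_mem; rewrite mem_enum. Qed.

Lemma finitary_Lbarmat : finitary B.
Proof.
apply: (@mcons_finitary (Lbarmat q j) (enum {: 'I_q.+1 * 'I_2})) => x.
by apply: In_of_mem; rewrite mem_enum.
Qed.

Lemma Lmat_CPL : crel_incl M C.
Proof.
move=> G f Mf u u_G; rewrite /= -(desig_emb j_range) -(ev_emb q j).
by apply: Mf => g /u_G; rewrite /= ev_emb desig_emb.
Qed.

Lemma Lbarmat_CPL : crel_incl B C.
Proof.
move=> G f Bf u u_G; have := Bf (fun n => (emb q (u n), u n)); rewrite /= eval_Lbarmat.
by case=> // g /u_G u_g; rewrite /= eval_Lbarmat /= ev_emb desig_emb.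
Qed.

Lemma Lmat_Lbarmat : crel_incl M B.
Proof.
move=> G f Mf w w_G; rewrite /= eval_Lbarmat; split.
  by apply: Mf => g /w_G; rewrite /= eval_Lbarmat => -[].
by apply: (Lmat_CPL Mf) => g /w_G; rewrite /= eval_Lbarmat => -[].
Qed.

Lemma cev_Delta u : cev u (Delta q (Var 0)) = 0 :> nat.
Proof.
rewrite (@ev_Opow 1 1) (@ev_Wedge 1 1) (@ev_Neg 1 1) /=.
by case: (u 0) => [[|[|]]] //= _; rewrite muln0.
Qed.

Definition delta_explosion : rule := ([:: Delta q (Var 0)], Bot (Var 0)).
Definition delta_negation : rule := ([::], Neg (Delta q (Var 0))).

Lemma ev_Delta_one : ev (fun _ => inord 1) (Delta q (Var 0)) = q :> nat.
Proof.
rewrite ev_Delta /= inordK; last by rewrite ltnS prime_gt0.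
by rewrite /interior prime_gt1 // mul1n.
Qed.

Lemma delta_explosion_Lbarmat : valid_rule B delta_explosion.
Proof.
move=> w /(_ (Delta q (Var 0)) (or_introl erefl)).
by rewrite /= eval_Lbarmat /= cev_Delta => -[].
Qed.

Lemma delta_explosion_not_Lmat : ~ valid_rule M delta_explosion.
Proof.
move=> /(_ (fun _ => inord 1)) explode.
have j_le_delta : j <= ev (fun _ => inord 1) (Delta q (Var 0)).
  by rewrite ev_Delta_one; case/andP: j_range.
have : j <= ev (fun _ => inord 1) (Bot (Var 0)) by apply: explode => g [<-|].
by rewrite ev_Bot leqNgt; case/andP: j_range => ->.
Qed.

Lemma delta_negation_CPL : valid_rule C delta_negation.
Proof. by move=> u _; rewrite /= (@ev_Neg 1 1) cev_Delta. Qed.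

Lemma delta_negation_not_Lbarmat : ~ valid_rule B delta_negation.
Proof.
move=> /(_ (fun _ => (inord 1, ord0)) (fun g (x : List.In g [::]) => False_ind _ x)).
by rewrite /= eval_Lbarmat /= ev_Neg ev_Delta_one subnn leqNgt; case/andP: j_range => -> _ [].
Qed.

Lemma Lmat_sincl_Lbarmat : crel_sincl M B.
Proof.
split; first exact: Lmat_Lbarmat.
by move=> BM; apply/delta_explosion_not_Lmat/BM/delta_explosion_Lbarmat.
Qed.

Lemma Lbarmat_sincl_CPL : crel_sincl B C.
Proof.
split; first exact: Lbarmat_CPL.
by move=> CB; apply/delta_negation_not_Lbarmat/CB/delta_negation_CPL.
Qed.

Lemma eq_Lbarmat_of_between (R : crel) : is_logic R -> crel_incl M R ->
  ~ crel_incl R M -> ~ crel_incl C R -> crel_eq R B.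
Proof.
move=> R_logic MR not_RM /not_crel_incl [G [f [C_f not_R_f]]].
have RB : crel_incl R B.
  have [G0 G0G C0_f] := finitary_CPL C_f.
  have not_R0 : ~ R (set_of_seq G0) f by move/(logic_mono R_logic G0G).
  by case: (unprovable_cases R_logic MR not_R0) => [/(_ C0_f)|[/not_RM|[]]].
move=> G' f'; split=> [/RB //|B_f'].
have [G0 G0G B0_f'] := finitary_Lbarmat B_f'.
apply: (logic_mono R_logic G0G); apply: NNPP => not_R0.
by case: (unprovable_cases R_logic MR not_R0) => [/(_ (Lbarmat_CPL B0_f'))|[/not_RM|[_ /(_ B0_f')]]].
Qed.

Lemma Lbarmat_strongly_maximal : strongly_maximal B C.
Proof.
split=> [|r r_C not_r_B G f]; first exact: Lbarmat_sincl_CPL.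
split=> [|C_f R R_logic BR r_R].
  by move/(_ C (mcons_logic _) Lbarmat_CPL r_C).
case: (classic (crel_incl C R)) => [CR|not_CR]; first exact: CR.
have MR : crel_incl M R by move=> G' f' /Lmat_Lbarmat/BR.
have not_RM : ~ crel_incl R M.
  by move=> RM; apply/delta_explosion_not_Lmat/RM/BR/delta_explosion_Lbarmat.
have RB := eq_Lbarmat_of_between R_logic MR not_RM not_CR.
by case: not_r_B; apply/RB.
Qed.

Lemma eq_Lbarmat_of_strongly_maximal (R : crel) :
  is_logic R -> crel_incl M R -> strongly_maximal R C -> crel_eq R B.
Proof.
move=> R_logic MR [[_ not_CR] R_max]; apply: eq_Lbarmat_of_between => // RM.
have ext_C := R_max _ (Lbarmat_CPL delta_explosion_Lbarmat)
  (fun r_R => delta_explosion_not_Lmat (RM _ _ r_R)).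
apply: (proj2 Lbarmat_sincl_CPL) => G f /ext_C /(_ B (mcons_logic _)); apply.
  by move=> G' f' /RM/Lmat_Lbarmat.
exact: delta_explosion_Lbarmat.
Qed.
End Main.

Theorem corollary5p8 (q j : nat) (hq : prime q) (hj : 0 < j <= q) :
  (crel_incl (mcons (Lmat q j)) (mcons (Lbarmat q j)) /\
   strongly_maximal (mcons (Lbarmat q j)) (mcons CPLmat)) /\
  (forall R : crel, finitary_logic R ->
     crel_incl (mcons (Lmat q j)) R -> strongly_maximal R (mcons CPLmat) ->
     crel_eq R (mcons (Lbarmat q j))) /\
  (crel_sincl (mcons (Lmat q j)) (mcons (Lbarmat q j)) /\
   crel_sincl (mcons (Lbarmat q j)) (mcons CPLmat)) /\
  (forall R : crel, finitary_logic R ->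
     crel_sincl (mcons (Lmat q j)) R -> crel_sincl R (mcons CPLmat) ->
     crel_eq R (mcons (Lbarmat q j))).
Proof.
split; first split.
- exact: Lmat_Lbarmat.
- exact: Lbarmat_strongly_maximal.
split; first by move=> R [R_logic _]; apply: eq_Lbarmat_of_strongly_maximal.
split; first split.
- exact: Lmat_sincl_Lbarmat.
- exact: Lbarmat_sincl_CPL.
by move=> R [R_logic _] [MR not_RM] [_ not_CR]; apply: eq_Lbarmat_of_between.
Qed.
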